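(* Let $\beta,\lambda,\gamma,M,k_\omega,k_{P_\omega}>0$, $q\ge 1$ and $\omega^*\ge 0$, and consider the system for $E,I\ge 0$, $\omega,P_\omega$: $$\frac{dE}{dt}=\beta(1-\omega)I-\lambda E,\quad \frac{dI}{dt}=\lambda E-\gamma I,\quad \frac{d\omega}{dt}=k_\omega\left(\frac{(\lambda E)^q}{M^q+(\lambda E)^q}(1-\omega^*P_\omega)-\omega\right),\quad \frac{dP_\omega}{dt}=k_{P_\omega}(\omega-P_\omega).$$ Then: 1. If $\beta<\gamma$, the only physically meaningful steady state (with $E,I\ge 0$) is the disease-free steady state $(E,I,\omega,P_\omega)=(0,0,0,0)$, and it is asymptotically stable. 2. If $0<\beta-\gamma<\frac{\gamma}{\omega^*}$, the disease-free steady state is unstable, and the endemic steady state $$(\bar E,\bar I,\bar\omega,\bar P_\omega)=\left(\frac{M}{\lambda}X^{1/q},\ \frac{M}{\gamma}X^{1/q},\ \frac{\beta-\gamma}{\beta},\ \frac{\beta-\gamma}{\beta}\right),\qquad X=\frac{\beta-\gamma}{\gamma-\omega^*(\beta-\gamma)},$$ is positive and asymptotically stable. Furthermore, trajectories near the endemic steady state may or may not exhibit oscillatory behavior, depending on the parameter values. 3. If $\beta-\gamma>\frac{\gamma}{\omega^*}$, the only physically meaningful steady state is the disease-free steady state, and it is unstable.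
   Context: This is a reduced (early-outbreak, one-delay) SEIR behavior-perception model in which the fear of infection has been replaced by its quasi-steady value $(\lambda E)^q/(M^q+(\lambda E)^q)$: $E$ = exposed, $I$ = infectious, $\omega$ = social distancing level, $P_\omega$ = perceived frustration with social distancing; $\beta$ = transmission rate, $\lambda^{-1}$ = incubation period, $\gamma^{-1}$ = infectious period, $k_\omega,k_{P_\omega}$ = rates of change, $M$ = threshold of new daily infections, $q$ = Hill steepness, $\omega^*$ = maximal reduction of social distancing due to frustration. Convention: when $\omega^*=0$ (''no frustration'' case), $\gamma/\omega^*$ is read as $+\infty$. Stability refers to local stability of equilibria. *)

From HB Require Import structures.
From mathcomp Require Import all_boot all_order all_algebra.
From mathcomp Require Import all_classical all_reals all_analysis.
From mathcomp Require Import complex.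
Set Implicit Arguments. Unset Strict Implicit. Unset Printing Implicit Defensive.
Import Order.TTheory GRing.Theory Num.Theory.
Import numFieldNormedType.Exports.
Local Open Scope classical_set_scope.
Local Open Scope ring_scope.

Section SEIR.
Variable R : realType.

(* State vector x : 'rV[R]_4 with coordinates
   x 0 0 = E, x 0 1 = I, x 0 2 = omega, x 0 3 = P_omega. *)
Definition sE (x : 'rV[R]_4) := x ord0 (inord 0).
Definition sI (x : 'rV[R]_4) := x ord0 (inord 1).
Definition sW (x : 'rV[R]_4) := x ord0 (inord 2).
Definition sP (x : 'rV[R]_4) := x ord0 (inord 3).

Definition mkstate (E I w P : R) : 'rV[R]_4 :=
  \row_(i < 4) match val i with 0 => E | 1 => I | 2 => w | _ => P end.

Definition fear (lam M q E : R) : R :=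
  (lam * E) `^ q / (M `^ q + (lam * E) `^ q).

Definition seir_field (beta lam gam M q kw kP ws : R) (x : 'rV[R]_4) : 'rV[R]_4 :=
  mkstate
    (beta * (1 - sW x) * sI x - lam * sE x)
    (lam * sE x - gam * sI x)
    (kw * (fear lam M q (sE x) * (1 - ws * sP x) - sW x))
    (kP * (sW x - sP x)).

Definition steady_state (F : 'rV[R]_4 -> 'rV[R]_4) (x : 'rV[R]_4) := F x = 0.

Definition phys (x : 'rV[R]_4) := 0 <= sE x /\ 0 <= sI x.

(* Partial derivatives are
   taken from the right (the state space has E >= 0, and the Hill term is only
   defined for E >= 0); where F is differentiable this is the usual derivative. *)
Definition is_jacobian (F : 'rV[R]_4 -> 'rV[R]_4) (x : 'rV[R]_4) (J : 'M[R]_4) :=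
  forall i j : 'I_4,
    (fun h : R => (F (x + h *: delta_mx ord0 j) ord0 i - F x ord0 i) / h)
      @ (0 : R)^'+ --> J i j.

Definition eigenvalue (J : 'M[R]_4) (z : R[i]) :=
  root (map_poly (real_complex R) (char_poly J)) z.

Definition loc_asym_stable (F : 'rV[R]_4 -> 'rV[R]_4) (x : 'rV[R]_4) :=
  exists J, is_jacobian F x J /\ forall z, eigenvalue J z -> Re z < 0.

Definition loc_unstable (F : 'rV[R]_4 -> 'rV[R]_4) (x : 'rV[R]_4) :=
  exists J, is_jacobian F x J /\ exists z, eigenvalue J z /\ 0 < Re z.

Definition loc_oscillatory (F : 'rV[R]_4 -> 'rV[R]_4) (x : 'rV[R]_4) :=
  exists J, is_jacobian F x J /\ exists z, eigenvalue J z /\ Im z != 0.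

Definition gam_over_ws (gam ws : R) : \bar R :=
  if ws == 0 then +oo%E else (gam / ws)%:E.

Definition endemic_X (beta gam ws : R) : R :=
  (beta - gam) / (gam - ws * (beta - gam)).

Definition endemic_ss (beta lam gam M q ws : R) : 'rV[R]_4 :=
  let X := endemic_X beta gam ws in
  mkstate (M / lam * X `^ q^-1) (M / gam * X `^ q^-1)
          ((beta - gam) / beta) ((beta - gam) / beta).

Definition admissible (beta lam gam M q kw kP ws : R) :=
  0 < beta /\ 0 < lam /\ 0 < gam /\ 0 < M /\ 0 < kw /\ 0 < kP /\ 1 <= q /\ 0 <= ws.

Definition regime2 (beta gam ws : R) :=
  0 < beta - gam /\ ((beta - gam)%:E < gam_over_ws gam ws)%E.

End SEIR.

(* At a steady state with [I > 0] the E- and I-equations force [beta (1 - w) = gam]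
   and the omega-equation forces [w = f(E) (1 - ws w)], where the fear [f] lies in
   [[0, 1)]; this is impossible when [beta < gam] or [gam < ws (beta - gam)], and
   otherwise determines the endemic state.  The Jacobian at [(E, I, w, P)] has
   characteristic polynomial
     [((z + kw)(z + kP) + B kP) ((z + lam)(z + gam) - lam b) + a c (z + gam)(z + kP)]
   with [b = beta (1 - w)], [c = beta I], [a = kw (1 - ws P) f'(E)] and
   [B = kw ws f(E)].  At the disease-free state [c = 0], so the sign of [gam - beta]
   decides through the quadratic factor; at the endemic state [b = gam], and the
   quartic has no root with non-negative real part. *)

From Pilot Require Import Defs.
From HB Require Import structures.
From mathcomp Require Import all_boot all_order all_algebra.
From mathcomp Require Import all_classical all_reals all_analysis.
From mathcomp Require Import complex.
From mathcomp Require Import ring lra.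
Set Implicit Arguments. Unset Strict Implicit. Unset Printing Implicit Defensive.
Import Order.TTheory GRing.Theory Num.Theory.
Import numFieldNormedType.Exports.
Local Open Scope classical_set_scope.
Local Open Scope ring_scope.
Local Open Scope complex_scope.

Definition seir_jac {T : pzRingType} (lam b c gam a kw B kP : T) : 'M[T]_4 :=
  \matrix_(i < 4, j < 4)
    match val i, val j with
    | 0, 0 => - lam | 0, 1 => b | 0, 2 => - c
    | 1, 0 => lam | 1, 1 => - gam
    | 2, 0 => a | 2, 2 => - kw | 2, 3 => - B
    | 3, 2 => kP | 3, 3 => - kP
    | _, _ => 0
    end.

Lemma map_seir_jac (T T' : pzRingType) (f : {rmorphism T -> T'})
    (lam b c gam a kw B kP : T) :
  map_mx f (seir_jac lam b c gam a kw B kP) =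
  seir_jac (f lam) (f b) (f c) (f gam) (f a) (f kw) (f B) (f kP).
Proof.
apply/matrixP => i j; rewrite !mxE.
by case: i j => [[|[|[|[|?]]]] ?] [[|[|[|[|?]]]] ?]; rewrite /= ?rmorphN ?rmorph0.
Qed.

Lemma det_seir_jac (T : comNzRingType) (lam b c gam a kw B kP z : T) :
  \det (z%:M - seir_jac lam b c gam a kw B kP) =
  ((z + kw) * (z + kP) + B * kP) * ((z + lam) * (z + gam) - lam * b)
  + a * c * (z + gam) * (z + kP).
Proof.
(* Expanding with the entries abstracted as [e] keeps [mxE] from rewriting inside
   every cofactor, which is very slow. *)
set e := fun i j : nat =>
  z *+ (i == j) - seir_jac lam b c gam a kw B kP (inord i) (inord j).
have -> : z%:M - seir_jac lam b c gam a kw B kP = \matrix_(i < 4, j < 4) e i j.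
  by apply/matrixP => i j; rewrite [RHS]mxE /e !inord_val !mxE.
do 3 rewrite !(expand_det_row _ ord0) !big_ord_recl !big_ord0 /cofactor.
rewrite !det_mx11 !mxE /bump /= /e !mxE /= !inordK //=.
ring.
Qed.

Lemma horner_char_poly (T : comNzRingType) n (A : 'M[T]_n) a :
  (char_poly A).[a] = \det (a%:M - A).
Proof.
rewrite horner_sum; apply: eq_bigr => s _.
rewrite hornerM horner_exp !hornerE; congr (_ * _).
rewrite (big_morph _ (fun p q => hornerM p q a) (hornerC 1 a)).
by apply: eq_bigr => i _; rewrite !mxE !(hornerE, hornerMn).
Qed.

Lemma eigenvalue_seir_jac (R : realType) (lam b c gam a kw B kP : R) (z : R[i]) :
  Defs.eigenvalue (seir_jac lam b c gam a kw B kP) z <->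
  ((z + kw%:C) * (z + kP%:C) + (B * kP)%:C) * ((z + lam%:C) * (z + gam%:C) - (lam * b)%:C)
  + (a * c)%:C * (z + gam%:C) * (z + kP%:C) = 0.
Proof.
rewrite /Defs.eigenvalue map_char_poly map_seir_jac /root horner_char_poly det_seir_jac.
by rewrite !rmorphM; split => /eqP.
Qed.

Section ComplexRoots.
Variable R : rcfType.
Implicit Types (c p r : R) (z : R[i]).

Lemma Re_lt0E z : ('Re z < 0) = (complex.Re z < 0).
Proof. by rewrite -complexRe ltcR. Qed.

Lemma Re_gt0E z : (0 < 'Re z) = (0 < complex.Re z).
Proof. by rewrite -complexRe ltcR. Qed.

Lemma Im_eq0E z : ('Im z == 0) = (complex.Im z == 0).
Proof. by rewrite -complexIm eq_complex /= eqxx andbT. Qed.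

Lemma linear_Re_lt0 c z : 0 < c -> z + c%:C = 0 -> 'Re z < 0.
Proof.
case: z => x y c_gt0 /eqP; rewrite Re_lt0E /=; simpc.
by rewrite eq_complex /= => /andP[/eqP + _]; lra.
Qed.

Lemma linear_Im_eq0 c z : z + c%:C = 0 -> 'Im z = 0.
Proof.
case: z => x y /eqP; simpc; rewrite eq_complex /= => /andP[_ /eqP y0].
by apply/eqP; rewrite Im_eq0E y0.
Qed.

Lemma quadratic_Re_lt0 p r z : 0 < p -> 0 < r ->
  z ^+ 2 + p%:C * z + r%:C = 0 -> 'Re z < 0.
Proof.
case: z => x y p_gt0 r_gt0 /eqP; rewrite Re_lt0E expr2 /=; simpc.
rewrite eq_complex /= => /andP[/eqP re0 /eqP im0].
have [y0|y_neq0] := eqVneq y 0.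
  by rewrite y0 in re0; rewrite ltNge; apply/negP => x_ge0; nra.
have : 2 * x + p = 0 by apply: (mulIf y_neq0); rewrite mul0r -im0; ring.
lra.
Qed.

Lemma quadratic_pos_root p r : r < 0 -> exists2 x : R, 0 < x & x ^+ 2 + p * x + r = 0.
Proof.
move=> r_lt0; set s := Num.sqrt (p ^+ 2 - 4 * r).
have s2 : s ^+ 2 = p ^+ 2 - 4 * r by rewrite sqr_sqrtr //; nra.
have s_ge0 : 0 <= s by exact: sqrtr_ge0.
exists ((s - p) / 2).
  suff : p < s by lra.
  by rewrite ltNge; apply/negP => s_le; nra.
have -> : ((s - p) / 2) ^+ 2 + p * ((s - p) / 2) + r = (s ^+ 2 - (p ^+ 2 - 4 * r)) / 4.
  by field.
by rewrite s2 subrr mul0r.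
Qed.

(* Multiplying the equation by the conjugate of [P * (z + g)], where [P] is the
   first factor, and taking real parts yields a sum of non-negative terms, one of
   them positive when [Re z >= 0]. *)
Lemma endemic_quartic_Re_lt0 (l g kw kP B K : R) z :
  0 < l -> 0 < g -> 0 < kw -> 0 < kP -> 0 <= B -> 0 < K ->
  ((z + kw%:C) * (z + kP%:C) + (B * kP)%:C) * ((z + l%:C) * (z + g%:C) - (l * g)%:C)
  + K%:C * (z + g%:C) * (z + kP%:C) = 0 -> 'Re z < 0.
Proof.
case: z => x y l_gt0 g_gt0 kw_gt0 kP_gt0 B_ge0 K_gt0 /eqP.
rewrite Re_lt0E /=; simpc; rewrite eq_complex /= => /andP[/eqP re0 /eqP im0].
rewrite ltNge; apply/negP => x_ge0.
set V1 := (x + kw) * (x + kP) - y * y + B * kP.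
set V2 := y * (2 * x + kw + kP).
set T1 := x * (x * x + y * y) + l * (x * x + y * y) + 2 * g * (x * x) + g * (l + g) * x.
set T2 := ((x + kP) * (x + kP) + y * y) * (x + kw) + B * kP * (x + kP).
have key : (V1 * V1 + V2 * V2) * T1 + K * ((x + g) * (x + g) + y * y) * T2 = 0.
  have comb (a b : R) : a = 0 -> b = 0 ->
      a * ((x + g) * V1 - y * V2) + b * ((x + g) * V2 + y * V1) = 0.
    by move=> -> ->; rewrite !mul0r addr0.
  by rewrite -(comb _ _ re0 im0) /V1 /V2 /T1 /T2; ring.
have x_l : 0 <= x + l by lra.
have x_kw : 0 < x + kw by lra.
have x_kP : 0 < x + kP by lra.
have T1_ge0 : 0 <= T1.
  have n_ge0 : 0 <= x * x + y * y by nra.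
  have x_lg : 0 <= 2 * x + l + g by lra.
  have := mulr_ge0 x_l n_ge0; have := mulr_ge0 (mulr_ge0 (ltW g_gt0) x_ge0) x_lg.
  rewrite /T1; lra.
have T2_gt0 : 0 < T2.
  have n_gt0 : 0 < (x + kP) * (x + kP) + y * y by nra.
  have := mulr_gt0 n_gt0 x_kw; have := mulr_ge0 (mulr_ge0 B_ge0 (ltW kP_gt0)) (ltW x_kP).
  rewrite /T2; lra.
have : 0 < K * ((x + g) * (x + g) + y * y) * T2.
  by rewrite -mulrA; apply: (mulr_gt0 K_gt0); apply: mulr_gt0 T2_gt0; nra.
have : 0 <= (V1 * V1 + V2 * V2) * T1 by apply: mulr_ge0 => //; nra.
lra.
Qed.

End ComplexRoots.

Section HillFunction.
Variable R : realType.
Implicit Types (lam M q E x d l : R) (f g : R -> R).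

Lemma cvg_at_right_ext f g x l :
  (forall h, x < h -> f h = g h) -> g @ x^'+ --> l -> f @ x^'+ --> l.
Proof.
move=> fg; apply: cvg_trans; apply: near_eq_cvg.
by apply: filterS (nbhs_right_gt x) => h /fg ->.
Qed.

Lemma is_derive_cvg_quotient_right f x d :
  is_derive x 1 f d -> (fun h => (f (x + h) - f x) / h) @ 0^'+ --> d.
Proof.
case=> df <-; apply: cvg_dnbhs_at_right.
suff -> : (fun h => (f (x + h) - f x) / h) =
          (fun h => h^-1 *: ((f \o shift x) (h *: 1) - f x)) by [].
by apply/funext => h; rewrite /= -[h%:A]/(h * 1) mulr1 [h + x]addrC mulrC.
Qed.

Lemma fear0 lam M q : q != 0 -> fear lam M q 0 = 0.
Proof. by move=> q0; rewrite /fear mulr0 powR0 // mul0r. Qed.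

Lemma fear_ge0 lam M q E : 0 <= fear lam M q E.
Proof. by rewrite /fear divr_ge0 ?addr_ge0 ?powR_ge0. Qed.

Lemma fear_lt1 lam M q E : 0 < M -> fear lam M q E < 1.
Proof.
move=> M_gt0; have den_gt0 : 0 < M `^ q + (lam * E) `^ q.
  by rewrite ltr_pwDl ?powR_ge0 ?powR_gt0.
by rewrite /fear ltr_pdivrMr // mul1r ltr_pwDl ?powR_ge0 ?powR_gt0.
Qed.

Definition dfear lam M q E : R :=
  q * lam * (lam * E) `^ (q - 1) * M `^ q / (M `^ q + (lam * E) `^ q) ^+ 2.

Lemma dfear_gt0 lam M q E : 0 < lam -> 0 < M -> 0 < q -> 0 < E -> 0 < dfear lam M q E.
Proof.
move=> lam_gt0 M_gt0 q_gt0 E_gt0; have lamE_gt0 := mulr_gt0 lam_gt0 E_gt0.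
rewrite /dfear divr_gt0 ?exprn_gt0 ?addr_gt0 ?mulr_gt0 ?powR_gt0 //.
Qed.

Lemma is_derive_fear lam M q E : 0 < lam -> 0 < M -> 0 < E ->
  is_derive E 1 (fear lam M q) (dfear lam M q E).
Proof.
move=> lam_gt0 M_gt0 E_gt0.
pose u t := (lam * t) `^ q.
have du : is_derive E 1 u (q * (lam * E) `^ (q - 1) * lam).
  apply: (is_derive1_comp (f := (@powR R)^~ q) (g := *%R lam)).
    exact/is_derive1_powR/mulr_gt0.
  by apply: is_derive_eq; exact: mulr1.
have den_gt0 : 0 < M `^ q + u E.
  by have := powR_gt0 q M_gt0; have := powR_ge0 (lam * E) q; rewrite /u; lra.
have -> : fear lam M q = u * (fun t => (M `^ q + u t)^-1) by [].
have dden : is_derive E 1 (fun t => M `^ q + u t) (q * (lam * E) `^ (q - 1) * lam).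
  by apply: is_derive_eq (is_deriveD (is_derive_cst (M `^ q) E 1) du) _; rewrite add0r.
apply: is_derive_eq (is_deriveM du (is_deriveV (f := fun t => M `^ q + u t) _ dden)) _.
  exact: lt0r_neq0.
rewrite -![_ *: _]/(_ * _) /dfear /u /= -/(u E); field.
by rewrite lt0r_neq0.
Qed.

Lemma cvg_fear_quotient0 lam M q : 0 < lam -> 0 < M -> 1 <= q ->
  exists d, (fun h => (fear lam M q (0 + h) - fear lam M q 0) / h) @ 0^'+ --> d.
Proof.
move=> lam_gt0 M_gt0 q_ge1; have q_gt0 : 0 < q := lt_le_trans ltr01 q_ge1.
have [L powL] : exists L : R, (fun h : R => h `^ (q - 1)) @ 0^'+ --> L.
  have [->|q_neq1] := eqVneq q 1.
    by exists 1; rewrite subrr; under eq_fun do rewrite powRr0; exact: cvg_cst.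
  by exists 0; apply: powR_cvg0; rewrite subr_gt0 lt_neqAle eq_sym q_neq1.
set a := lam `^ q; set m := M `^ q.
have m_gt0 : 0 < m by exact: powR_gt0.
exists (a * L / (m + a * 0)).
apply: (@cvg_at_right_ext _ (fun h => a * h `^ (q - 1) / (m + a * h `^ q))).
  move=> h h_gt0; rewrite fear0 ?gt_eqF // subr0 add0r /fear powRM ?ltW //.
  rewrite -(mulr_powRB1 (ltW h_gt0) q_gt0) -/a -/m.
  have : 0 < m + a * (h * h `^ (q - 1)).
    by rewrite ltr_pwDl // mulr_ge0 ?powR_ge0 // mulr_ge0 ?powR_ge0 ?ltW.
  by move=> den_gt0; field; rewrite !gt_eqF.
apply: cvgM; first exact: cvgMl_tmp.
apply: cvgV; first by rewrite mulr0 addr0 gt_eqF.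
by apply: cvgD; [exact: cvg_cst | apply: cvgMl_tmp; exact: powR_cvg0].
Qed.

End HillFunction.

Section Coordinates.
Variable R : realType.
Implicit Types (E I w P : R) (x : 'rV[R]_4).

Lemma sE_mkstate E I w P : sE (mkstate E I w P) = E.
Proof. by rewrite /sE mxE /= inordK. Qed.

Lemma sI_mkstate E I w P : sI (mkstate E I w P) = I.
Proof. by rewrite /sI mxE /= inordK. Qed.

Lemma sW_mkstate E I w P : sW (mkstate E I w P) = w.
Proof. by rewrite /sW mxE /= inordK. Qed.

Lemma sP_mkstate E I w P : sP (mkstate E I w P) = P.
Proof. by rewrite /sP mxE /= inordK. Qed.

Lemma mkstateK x : mkstate (sE x) (sI x) (sW x) (sP x) = x.
Proof.
apply/rowP => i; rewrite mxE /sE /sI /sW /sP.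
by case: i => -[|[|[|[|i]]]] Hi; congr (x _ _); apply/val_inj; rewrite /= inordK.
Qed.

Lemma mkstate0 : mkstate 0 0 0 0 = 0 :> 'rV[R]_4.
Proof. by apply/rowP => i; rewrite !mxE; case: (val i) => [|[|[|]]]. Qed.

Lemma coords0 : [/\ sE 0 = 0 :> R, sI 0 = 0 :> R, sW 0 = 0 :> R & sP 0 = 0 :> R].
Proof. by split; rewrite /sE /sI /sW /sP mxE. Qed.

Lemma mkstate_eq0 E I w P :
  mkstate E I w P = 0 <-> [/\ E = 0, I = 0, w = 0 & P = 0].
Proof.
split=> [s0 | [-> -> -> ->]]; last exact: mkstate0.
have [E0 I0 W0 P0] := coords0.
split; [move: (congr1 (@sE R) s0) | move: (congr1 (@sI R) s0) | move: (congr1 (@sW R) s0) |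
        move: (congr1 (@sP R) s0)];
  by rewrite ?sE_mkstate ?sI_mkstate ?sW_mkstate ?sP_mkstate ?E0 ?I0 ?W0 ?P0.
Qed.

Lemma shift_coord x (h : R) (j : 'I_4) k : (k < 4)%N ->
  (x + h *: delta_mx ord0 j) ord0 (inord k) =
  if k == j then x ord0 (inord k) + h else x ord0 (inord k).
Proof.
move=> k_lt4; rewrite !mxE eqxx /= -(inj_eq val_inj) /= inordK //.
by case: (k == j); rewrite ?mulr1 ?mulr0 ?addr0.
Qed.

End Coordinates.

Lemma is_jacobian_seir (R : realType) (beta lam gam M q kw kP ws : R) (x : 'rV[R]_4) (d : R) :
  (fun h => (fear lam M q (sE x + h) - fear lam M q (sE x)) / h) @ 0^'+ --> d ->
  is_jacobian (seir_field beta lam gam M q kw kP ws) x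
    (seir_jac lam (beta * (1 - sW x)) (beta * sI x) gam (kw * (1 - ws * sP x) * d) kw
        (kw * ws * fear lam M q (sE x)) kP).
Proof.
move=> fear_d i j; rewrite /seir_field /sE /sI /sW /sP.
case: i => -[|[|[|[|i]]]] Hi //; case: j => -[|[|[|[|j]]]] Hj //.
all: rewrite [X in _ --> X]mxE /=.
(* Apart from the fear term, every difference quotient is constant for [h > 0]. *)
all: try (match goal with |- _ @ _ --> ?c =>
  apply: (@cvg_at_right_ext _ _ (fun=> c)); last exact: cvg_cst end;
  move=> h h_gt0; rewrite !shift_coord //= /mkstate !mxE /=; field; exact: lt0r_neq0).
apply: (@cvg_at_right_ext _ _ (fun h => kw * (1 - ws * x ord0 (inord 3)) *
   ((fear lam M q (x ord0 (inord 0) + h) - fear lam M q (x ord0 (inord 0))) / h))).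
  move=> h h_gt0; rewrite !shift_coord //= /mkstate !mxE /=; field; exact: lt0r_neq0.
exact: cvgMl_tmp.
Qed.

Lemma is_jacobian_unique (R : realType) (F : 'rV[R]_4 -> 'rV[R]_4) x J1 J2 :
  is_jacobian F x J1 -> is_jacobian F x J2 -> J1 = J2.
Proof.
move=> J1x J2x; apply/matrixP => i j.
by rewrite -(cvg_lim (@Rhausdorff R) (J1x i j)) (cvg_lim (@Rhausdorff R) (J2x i j)).
Qed.

Lemma gam_over_ws_gtP (R : realType) (gam ws t : R) : 0 < gam -> 0 <= ws ->
  (t%:E < gam_over_ws gam ws)%E <-> ws * t < gam.
Proof.
move=> gam_gt0; rewrite /gam_over_ws; have [-> _|ws_neq0 ws_ge0] := eqVneq ws 0.
  by rewrite mul0r ltry gam_gt0.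
have ws_gt0 : 0 < ws by rewrite lt_neqAle eq_sym ws_neq0.
by rewrite lte_fin ltr_pdivlMr // mulrC.
Qed.

Lemma gam_over_ws_ltP (R : realType) (gam ws t : R) : 0 <= ws ->
  (gam_over_ws gam ws < t%:E)%E <-> 0 < ws /\ gam < ws * t.
Proof.
rewrite /gam_over_ws; have [-> _|ws_neq0 ws_ge0] := eqVneq ws 0.
  by rewrite ltNge leey ltxx; split=> [|[]].
have ws_gt0 : 0 < ws by rewrite lt_neqAle eq_sym ws_neq0.
by rewrite lte_fin ltr_pdivrMr // mulrC; split=> [|[]].
Qed.

Section SeirModel.
Variable R : realType.
Variables beta lam gam M q kw kP ws : R.
Hypotheses (beta_gt0 : 0 < beta) (lam_gt0 : 0 < lam) (gam_gt0 : 0 < gam)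
  (M_gt0 : 0 < M) (kw_gt0 : 0 < kw) (kP_gt0 : 0 < kP) (q_ge1 : 1 <= q) (ws_ge0 : 0 <= ws).

Local Notation F := (seir_field beta lam gam M q kw kP ws).

Let q_gt0 : 0 < q. Proof. exact: lt_le_trans ltr01 q_ge1. Qed.

Lemma steady_stateE x : steady_state F x <->
  [/\ beta * (1 - sW x) * sI x = lam * sE x, lam * sE x = gam * sI x,
      fear lam M q (sE x) * (1 - ws * sP x) = sW x & sW x = sP x].
Proof.
rewrite /steady_state mkstate_eq0.
split=> [[/subr0_eq e1 /subr0_eq e2 /eqP e3 /eqP e4] | [-> -> -> ->]].
  move: e3 e4; rewrite !mulf_eq0 (gt_eqF kw_gt0) (gt_eqF kP_gt0) /= !subr_eq0.
  by move=> /eqP e3 /eqP e4.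
by split; rewrite subrr ?mulr0.
Qed.

Lemma steady_state0 : steady_state F 0.
Proof.
apply/steady_stateE; have [-> -> -> ->] := @coords0 R.
by rewrite fear0 ?lt0r_neq0 // !(mulr0, mul0r).
Qed.

Lemma phys_steady_state_cases x : phys x -> steady_state F x -> x = 0 \/
  [/\ 0 < sI x, beta * (1 - sW x) = gam & fear lam M q (sE x) * (1 - ws * sW x) = sW x].
Proof.
move=> [E_ge0 I_ge0] /steady_stateE [e1 e2 e3 e4]; rewrite -e4 in e3.
have [I0|I_neq0] := eqVneq (sI x) 0; [left | right].
  have E0 : sE x = 0 by apply: (mulfI (lt0r_neq0 lam_gt0)); rewrite e2 I0 !mulr0.
  have W0 : sW x = 0 by rewrite -e3 E0 fear0 ?lt0r_neq0 // mul0r.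
  by rewrite -[x]mkstateK E0 I0 W0 -e4 W0 mkstate0.
have I_gt0 : 0 < sI x by rewrite lt_neqAle eq_sym I_neq0.
split=> //; apply: (mulIf I_neq0); by rewrite e1 e2.
Qed.

Lemma phys_steady_state_eq0_lt x : beta < gam ->
  phys x -> steady_state F x -> x = 0.
Proof.
move=> lt_beta_gam px /(phys_steady_state_cases px) [//|[_ e1 e2]]; exfalso.
have W_lt0 : sW x < 0 by rewrite -(pmulr_rlt0 _ beta_gt0); lra.
have : 0 <= fear lam M q (sE x) * (1 - ws * sW x).
  by rewrite mulr_ge0 ?fear_ge0 //; have := mulr_ge0_le0 ws_ge0 (ltW W_lt0); lra.
lra.
Qed.

Lemma phys_steady_state_eq0_gt x : gam < ws * (beta - gam) ->
  phys x -> steady_state F x -> x = 0.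
Proof.
move=> gt_ws px /(phys_steady_state_cases px) [//|[_ e1 e2]]; exfalso.
have W_eq : beta * sW x = beta - gam by lra.
have bg_gt0 : 0 < beta - gam.
  rewrite ltNge; apply/negP => /(mulr_ge0_le0 ws_ge0) le0.
  by have := lt_trans gam_gt0 gt_ws; rewrite ltNge le0.
have W_gt0 : 0 < sW x by rewrite -(pmulr_rgt0 _ beta_gt0) W_eq.
have lt1W : 1 - ws * sW x < sW x.
  by rewrite -(ltr_pM2l beta_gt0) mulrBr mulr1 mulrCA W_eq; nra.
have f_ge0 := @fear_ge0 R lam M q (sE x); have f_lt1 := fear_lt1 lam q (sE x) M_gt0.
(* Since the fear lies in [[0, 1)], [e2] would make [sW x] smaller than itself. *)
have [c_ge0|c_lt0] := lerP 0 (1 - ws * sW x); nra.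
Qed.

Lemma is_jacobian_seir0 : exists a, is_jacobian F 0 (seir_jac lam beta 0 gam a kw 0 kP).
Proof.
have [d fear_d] := cvg_fear_quotient0 lam_gt0 M_gt0 q_ge1.
have [E0 I0 W0 P0] := @coords0 R.
exists (kw * (1 - ws * sP 0) * d).
have := @is_jacobian_seir R beta lam gam M q kw kP ws 0 d; rewrite E0 => /(_ fear_d).
by rewrite I0 W0 fear0 ?lt0r_neq0 // !(mulr0, subr0, mulr1).
Qed.

Lemma loc_asym_stable0 : beta < gam -> loc_asym_stable F 0.
Proof.
move=> lt_beta_gam; have [a Ja] := is_jacobian_seir0.
exists (seir_jac lam beta 0 gam a kw 0 kP); split => // z /eigenvalue_seir_jac.
rewrite !(mulr0, mul0r, rmorph0, addr0) => /eqP; rewrite !mulf_eq0 -!orbA.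
case/or3P => /eqP; [exact: linear_Re_lt0 | exact: linear_Re_lt0 |].
have -> : (z + lam%:C) * (z + gam%:C) - (lam * beta)%:C =
          z ^+ 2 + (lam + gam)%:C * z + (lam * (gam - beta))%:C.
  by rewrite !rmorphD !rmorphM rmorphB /=; ring.
by apply: quadratic_Re_lt0; rewrite ?addr_gt0 ?mulr_gt0 ?subr_gt0.
Qed.

Lemma loc_unstable0 : gam < beta -> loc_unstable F 0.
Proof.
move=> lt_gam_beta; have [a Ja] := is_jacobian_seir0.
exists (seir_jac lam beta 0 gam a kw 0 kP); split => //.
have lam_gam_lt0 : lam * (gam - beta) < 0 by rewrite pmulr_rlt0 // subr_lt0.
have [r r_gt0 root_r] := quadratic_pos_root (lam + gam) lam_gam_lt0.
exists r%:C; split; last by rewrite Re_gt0E.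
apply/eigenvalue_seir_jac; rewrite !(mulr0, mul0r, rmorph0, addr0).
have -> : (r%:C + lam%:C) * (r%:C + gam%:C) - (lam * beta)%:C =
          ((r + lam) * (r + gam) - lam * beta)%:C.
  by rewrite rmorphB !rmorphM !rmorphD.
have -> : (r + lam) * (r + gam) - lam * beta = 0 by rewrite -root_r; ring.
by rewrite rmorph0 mulr0.
Qed.

Section Endemic.
Hypotheses (bg_gt0 : 0 < beta - gam) (ws_lt : ws * (beta - gam) < gam).

Local Notation xe := (endemic_ss beta lam gam M q ws).
Local Notation X := (endemic_X beta gam ws).

Let X_gt0 : 0 < X. Proof. by rewrite divr_gt0 // subr_gt0. Qed.

Let Y_gt0 : 0 < X `^ q^-1. Proof. exact: powR_gt0. Qed.

Lemma fear_endemic : fear lam M q (sE xe) = X / (1 + X).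
Proof.
rewrite sE_mkstate /fear.
have -> : lam * (M / lam * X `^ q^-1) = M * X `^ q^-1 by field; exact: lt0r_neq0.
rewrite powRM ?powR_ge0 ?ltW // -powRrM (mulVf (lt0r_neq0 q_gt0)) powRr1 ?ltW //.
have Mq_gt0 : 0 < M `^ q := powR_gt0 q M_gt0.
have den_gt0 : 0 < M `^ q + M `^ q * X by apply: addr_gt0 => //; exact: mulr_gt0.
by field; rewrite !gt_eqF // addr_gt0.
Qed.

Lemma endemic_ss_gt0 : 0 < sE xe /\ 0 < sI xe /\ 0 < sW xe /\ 0 < sP xe.
Proof.
rewrite sE_mkstate sI_mkstate sW_mkstate sP_mkstate.
by do ![split | apply: mulr_gt0 | rewrite invr_gt0].
Qed.

Lemma steady_state_endemic : steady_state F xe.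
Proof.
apply/steady_stateE; rewrite fear_endemic sE_mkstate sI_mkstate sW_mkstate sP_mkstate.
have den_gt0 : 0 < gam - ws * (beta - gam) by rewrite subr_gt0.
split=> //; try by field; rewrite !gt_eqF.
by rewrite /endemic_X; field; rewrite !gt_eqF // addr_gt0.
Qed.

Lemma loc_asym_stable_endemic : loc_asym_stable F xe.
Proof.
have [E_gt0 [I_gt0 [W_gt0 P_gt0]]] := endemic_ss_gt0.
have fear_d := is_derive_cvg_quotient_right (is_derive_fear q lam_gt0 M_gt0 E_gt0).
eexists; split; first exact: is_jacobian_seir fear_d.
move=> z /eigenvalue_seir_jac.
have -> : beta * (1 - sW xe) = gam by rewrite sW_mkstate; field; rewrite gt_eqF.
have wsP_lt1 : 0 < 1 - ws * sP xe.
  rewrite sP_mkstate subr_gt0 mulrA ltr_pdivrMr // mul1r.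
  by apply: lt_trans ws_lt _; rewrite -subr_gt0.
apply: endemic_quartic_Re_lt0 => //.
  exact: mulr_ge0 (mulr_ge0 (ltW kw_gt0) ws_ge0) (fear_ge0 _ _ _ _).
apply: mulr_gt0 (mulr_gt0 beta_gt0 I_gt0).
exact: mulr_gt0 (mulr_gt0 kw_gt0 wsP_lt1) (dfear_gt0 lam_gt0 M_gt0 q_gt0 E_gt0).
Qed.

End Endemic.

Lemma seir_regime1 : beta < gam ->
  (forall x, phys x -> steady_state F x -> x = 0) /\
  steady_state F 0 /\ loc_asym_stable F 0.
Proof.
move=> lt_beta_gam; split; first by move=> x; exact: phys_steady_state_eq0_lt.
by split; [exact: steady_state0 | exact: loc_asym_stable0].
Qed.

Lemma seir_regime2 : regime2 beta gam ws ->
  let xe := endemic_ss beta lam gam M q ws in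
  loc_unstable F 0 /\ steady_state F xe /\
  (0 < sE xe /\ 0 < sI xe /\ 0 < sW xe /\ 0 < sP xe) /\ loc_asym_stable F xe.
Proof.
move=> [bg_gt0 /(gam_over_ws_gtP _ gam_gt0 ws_ge0) ws_lt] xe.
split; first by apply: loc_unstable0; rewrite -subr_gt0.
split; first exact: steady_state_endemic.
by split; [exact: endemic_ss_gt0 | exact: loc_asym_stable_endemic].
Qed.

Lemma seir_regime3 : (gam_over_ws gam ws < (beta - gam)%:E)%E ->
  (forall x, phys x -> steady_state F x -> x = 0) /\
  steady_state F 0 /\ loc_unstable F 0.
Proof.
move=> /(gam_over_ws_ltP _ _ ws_ge0) [ws_gt0 gam_lt].
split; first by move=> x; exact: phys_steady_state_eq0_gt.
split; first exact: steady_state0.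
apply: loc_unstable0; rewrite -subr_gt0 -(pmulr_rgt0 _ ws_gt0).
exact: lt_trans gam_gt0 gam_lt.
Qed.

End SeirModel.

Lemma seir_oscillatory_example (R : realType) :
  [/\ admissible (6 : R) 2 1 1 1 (3/2) 1 0, regime2 (6 : R) 1 0 &
      loc_oscillatory (seir_field (6 : R) 2 1 1 1 (3/2) 1 0) (endemic_ss (6 : R) 2 1 1 1 0)].
Proof.
split; first by do !split => //; lra.
  by split; rewrite /gam_over_ws ?eqxx ?ltry //; lra.
set xe := endemic_ss _ _ _ _ _ _.
have X_eq : endemic_X (6 : R) 1 0 = 5 by rewrite /endemic_X; field.
have E_eq : sE xe = 5 / 2 by rewrite sE_mkstate X_eq invr1 powRr1 //; field.
have I_eq : sI xe = 5 by rewrite sI_mkstate X_eq invr1 powRr1 //; field.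
have E_gt0 : 0 < sE xe by rewrite E_eq.
have fear_d := is_derive_cvg_quotient_right (is_derive_fear 1 (ltr0Sn _ 1) ltr01 E_gt0).
eexists; split; first exact: is_jacobian_seir fear_d.
exists (- 2 +i* 1); split; last by rewrite Im_eq0E oner_neq0.
apply/eigenvalue_seir_jac.
have -> : dfear 2 1 1 (sE xe) = 1 / 18.
  by rewrite E_eq /dfear subrr powRr0 !powRr1 //; field.
rewrite I_eq sW_mkstate sP_mkstate /=; simpc.
by apply/eqP; rewrite eq_complex /=; apply/andP; split; apply/eqP; field.
Qed.

Lemma seir_nonoscillatory_example (R : realType) :
  [/\ admissible (4 : R) 1 1 1 1 1 1 0, regime2 (4 : R) 1 0 &
      ~ loc_oscillatory (seir_field (4 : R) 1 1 1 1 1 1 0) (endemic_ss (4 : R) 1 1 1 1 0)].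
Proof.
split; first by do !split => //; lra.
  by split; rewrite /gam_over_ws ?eqxx ?ltry //; lra.
set xe := endemic_ss _ _ _ _ _ _.
have X_eq : endemic_X (4 : R) 1 0 = 3 by rewrite /endemic_X; field.
have E_eq : sE xe = 3 by rewrite sE_mkstate X_eq invr1 powRr1 //; field.
have I_eq : sI xe = 3 by rewrite sI_mkstate X_eq invr1 powRr1 //; field.
have E_gt0 : 0 < sE xe by rewrite E_eq.
have fear_d := is_derive_cvg_quotient_right (is_derive_fear 1 ltr01 ltr01 E_gt0).
have J_xe := @is_jacobian_seir R 4 1 1 1 1 1 1 0 _ _ fear_d.
move=> [J [/(is_jacobian_unique J_xe) <- [z [/eigenvalue_seir_jac char0 Im_z]]]].
have dfear_E : dfear 1 1 1 (sE xe) = 1 / 16.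
  by rewrite E_eq /dfear subrr powRr0 !powRr1 //; field.
have : (z + 1%:C) * (z + 1%:C) * ((z + (1 / 2)%:C) * (z + (3 / 2)%:C)) = 0.
  rewrite -[RHS]char0 dfear_E I_eq sW_mkstate sP_mkstate.
  case: (z) => x y /=; simpc; apply/eqP; rewrite eq_complex /=.
  by apply/andP; split; apply/eqP; field.
move/eqP; rewrite !mulf_eq0 -!orbA => /or4P[] /eqP /linear_Im_eq0 Im0;
  by rewrite Im0 eqxx in Im_z.
Qed.

Theorem theorem2 (R : realType) :
  (forall beta lam gam M q kw kP ws : R,
    admissible beta lam gam M q kw kP ws ->
    let F := seir_field beta lam gam M q kw kP ws in
    (* 1 *)
    (beta < gam ->
       (forall x, phys x -> steady_state F x -> x = 0) /\
       steady_state F 0 /\ loc_asym_stable F 0) /\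
    (* 2 *)
    (regime2 beta gam ws ->
       let xe := endemic_ss beta lam gam M q ws in
       loc_unstable F 0 /\
       steady_state F xe /\
       (0 < sE xe /\ 0 < sI xe /\ 0 < sW xe /\ 0 < sP xe) /\
       loc_asym_stable F xe) /\
    (* 3 *)
    (((gam_over_ws gam ws) < (beta - gam)%:E)%E ->
       (forall x, phys x -> steady_state F x -> x = 0) /\
       steady_state F 0 /\ loc_unstable F 0)) /\
  (* 2, last sentence: oscillations near the endemic state occur for some, but
     not all, admissible parameter values in regime 2 *)
  (exists beta lam gam M q kw kP ws : R,
     [/\ admissible beta lam gam M q kw kP ws, regime2 beta gam ws &
         loc_oscillatory (seir_field beta lam gam M q kw kP ws)
                         (endemic_ss beta lam gam M q ws)]) /\
  (exists beta lam gam M q kw kP ws : R,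
     [/\ admissible beta lam gam M q kw kP ws, regime2 beta gam ws &
         ~ loc_oscillatory (seir_field beta lam gam M q kw kP ws)
                           (endemic_ss beta lam gam M q ws)]).
Proof.
split.
  move=> beta lam gam M q kw kP ws
    [beta_gt0 [lam_gt0 [gam_gt0 [M_gt0 [kw_gt0 [kP_gt0 [q_ge1 ws_ge0]]]]]]] F.
  split; first exact: seir_regime1.
  split; first exact: seir_regime2.
  exact: seir_regime3.
split.
  by exists 6, 2, 1, 1, 1, (3/2), 1, 0; exact: seir_oscillatory_example.
by exists 4, 1, 1, 1, 1, 1, 1, 0; exact: seir_nonoscillatory_example.
Qed.
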